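(* Let $G$ be a graph of tree-width $\le w\in\mathbb N$, and let $\sigma$ be a finite star of separations of $G$ of order $\le w+1$ whose interior is finite. Suppose that all separations in $\sigma$ are left-$\ell$-robust for $\ell:=(w+1)^2(w+2)+w+1$. Then $\mathrm{torso}(\sigma)$ has tree-width $\le w$.
   Context: Graphs may be infinite. A separation of $G$ is a set $\{A,B\}$ with $A,B\subseteq V(G)$, $A\cup B=V(G)$ and no edge of $G$ between $A\setminus B$ and $B\setminus A$; its order is $|A\cap B|$; its orientations are $(A,B)$ and $(B,A)$, ordered by $(A,B)\le(C,D)$ iff $A\subseteq C$ and $B\supseteq D$. A star is a set $\sigma$ of oriented finite-order separations, not containing $(V(G),V(G))$, with $(A,B)\le(D,C)$ for any two distinct $(A,B),(C,D)\in\sigma$; its interior is $\mathrm{int}(\sigma)=\bigcap_{(A,B)\in\sigma}B$. $\mathrm{torso}(\sigma)$ is the graph obtained from $G[\mathrm{int}(\sigma)]$ by adding an edge $uv$ whenever distinct $u,v\in\mathrm{int}(\sigma)$ both lie in $A\cap B$ for some $(A,B)\in\sigma$. A finite-order $(A,B)$ is left-$\ell$-robust if there exist a set $U\subseteq A$ of size $\ell$ and pairwise disjoint paths $P_x\subseteq G[A]$ ($x\in A\cap B$) with $P_x$ ending in $x$, such that for each $x$ there are $\ell$ $U$–$P_x$ paths in $G[(A\setminus B)\cup\{x\}]$ meeting pairwise at most in their endvertices on $P_x$. A graph has tree-width $\le w$ if it has a tree-decomposition all of whose bags have at most $w+1$ vertices. *)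

(* Graphs may be infinite: a graph is a vertex type V with an
   adjacency relation adj : V -> V -> Prop (simple: symmetric, irreflexive).
   Vertex sets are predicates V -> Prop. *)
From Stdlib Require Import List Arith.
Import ListNotations.

Section Defs.
Context {V : Type}.

Definition simple_graph (adj : V -> V -> Prop) : Prop :=
  (forall u v, adj u v -> adj v u) /\ (forall v, ~ adj v v).

Definition finite_set (X : V -> Prop) : Prop :=
  exists l : list V, forall v, X v -> In v l.
Definition card_le (X : V -> Prop) (n : nat) : Prop :=
  exists l : list V, (forall v, X v -> In v l) /\ length l <= n.
Definition card_eq (X : V -> Prop) (n : nat) : Prop :=
  exists l : list V, NoDup l /\ length l = n /\ (forall v, X v <-> In v l).

Fixpoint walk (adj : V -> V -> Prop) (p : list V) : Prop :=
  match p with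
  | x :: ((y :: _) as t) => adj x y /\ walk adj t
  | _ => True
  end.

Definition is_path (adj : V -> V -> Prop) (p : list V) : Prop :=
  p <> [] /\ NoDup p /\ walk adj p.

Definition starts (p : list V) (u : V) : Prop := hd_error p = Some u.
Definition ends (p : list V) (v : V) : Prop := hd_error (rev p) = Some v.

Definition XY_path (adj : V -> V -> Prop) (X Y : V -> Prop) (p : list V) : Prop :=
  is_path adj p /\
  exists u v, starts p u /\ ends p v /\ X u /\ Y v /\
    (forall z, In z p -> X z -> z = u) /\ (forall z, In z p -> Y z -> z = v).

Definition osep := ((V -> Prop) * (V -> Prop))%type.

Definition is_separation (adj : V -> V -> Prop) (s : osep) : Prop :=
  (forall v, fst s v \/ snd s v) /\
  (forall u v, fst s u -> ~ snd s u -> snd s v -> ~ fst s v -> ~ adj u v).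

Definition sep_inter (s : osep) : V -> Prop := fun v => fst s v /\ snd s v.

Definition finite_order (s : osep) : Prop := finite_set (sep_inter s).
Definition order_le (s : osep) (n : nat) : Prop := card_le (sep_inter s) n.

Definition sep_le (s t : osep) : Prop :=
  (forall v, fst s v -> fst t v) /\ (forall v, snd t v -> snd s v).

Definition sep_inv (s : osep) : osep := (snd s, fst s).

Definition is_star (adj : V -> V -> Prop) (sigma : osep -> Prop) : Prop :=
  (forall s, sigma s -> is_separation adj s /\ finite_order s) /\
  (forall s, sigma s -> ~ (forall v, fst s v /\ snd s v)) /\
  (forall s t, sigma s -> sigma t -> s <> t -> sep_le s (sep_inv t)).

Definition finite_star (sigma : osep -> Prop) : Prop :=
  exists l : list osep, forall s, sigma s -> In s l.

Definition interior (sigma : osep -> Prop) : V -> Prop :=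
  fun v => forall s, sigma s -> snd s v.

Definition torso_adj (adj : V -> V -> Prop) (sigma : osep -> Prop)
  (u v : {x : V | interior sigma x}) : Prop :=
  proj1_sig u <> proj1_sig v /\
  (adj (proj1_sig u) (proj1_sig v) \/
   exists s, sigma s /\ sep_inter s (proj1_sig u) /\ sep_inter s (proj1_sig v)).

Definition left_robust (adj : V -> V -> Prop) (l : nat) (s : osep) : Prop :=
  exists U : V -> Prop,
    (forall u, U u -> fst s u) /\ card_eq U l /\
    exists P : V -> list V,
      (forall x, sep_inter s x ->
         is_path adj (P x) /\ (forall v, In v (P x) -> fst s v) /\ ends (P x) x) /\
      (forall x y, sep_inter s x -> sep_inter s y -> x <> y ->
         forall v, In v (P x) -> ~ In v (P y)) /\
      (forall x, sep_inter s x ->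
         exists Q : nat -> list V,
           (forall i, i < l ->
              XY_path adj U (fun v => In v (P x)) (Q i) /\
              (forall v, In v (Q i) -> (fst s v /\ ~ snd s v) \/ v = x)) /\
           (forall i j, i < l -> j < l -> i <> j ->
              Q i <> Q j /\
              (forall v, In v (Q i) -> In v (Q j) -> In v (P x)))).
End Defs.

Definition is_tree {T : Type} (tadj : T -> T -> Prop) : Prop :=
  simple_graph tadj /\ inhabited T /\
  (forall s t, exists p, is_path tadj p /\ starts p s /\ ends p t) /\
  (* no cycles *)
  (forall p : list T, is_path tadj p -> 3 <= length p ->
     forall a b, starts p a -> ends p b -> ~ tadj b a).

Definition tree_decomposition {W T : Type} (adj : W -> W -> Prop)
  (tadj : T -> T -> Prop) (bag : T -> W -> Prop) : Prop :=
  (forall v, exists t, bag t v) /\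
  (forall u v, adj u v -> exists t, bag t u /\ bag t v) /\
  (forall v t1 t2, bag t1 v -> bag t2 v ->
     exists p, is_path tadj p /\ starts p t1 /\ ends p t2 /\
               forall t, In t p -> bag t v).

Definition tw_le {W : Type} (adj : W -> W -> Prop) (w : nat) : Prop :=
  exists (T : Type) (tadj : T -> T -> Prop) (bag : T -> W -> Prop),
    is_tree tadj /\ tree_decomposition adj tadj bag /\
    forall t, card_le (bag t) (w + 1).

(** Replace every torso vertex [x] by its branch set: [x] together with the robustness paths
    [P_x ⊆ A] ending in [x], one for each [(A,B) ∈ σ] with [x ∈ A ∩ B].  Branch sets are
    connected and, since [σ] is a star, pairwise disjoint; so putting [x] into every bag that
    meets its branch set turns a tree-decomposition of [G] into one of the torso of the same
    width, as soon as the branch sets of any two vertices of a common separator meet a common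
    bag.  If they did not, an adhesion set [S = V_t ∩ V_t'] of size [<= w+1] would separate
    [P_x] from [P_y].  Of the [2ℓ] fan paths from [U] to [P_x] and to [P_y], at most [|S|] per
    side meet [S], and those avoiding [S] start at distinct vertices of [U]; hence
    [ℓ <= 2(w+1)].  So [ℓ >= 2w+3] already suffices. *)

From Stdlib Require Import List Arith Lia Classical ProofIrrelevance IndefiniteDescription FinFun.
Import ListNotations.

Lemma last_default {A} (a d : A) l : last (a :: l) d = last (a :: l) a.
Proof.
  revert a d; induction l as [|b l IH]; intros a d; [reflexivity|].
  change (last (b :: l) d = last (b :: l) a). now rewrite (IH b d), (IH b a).
Qed.

Lemma last_in {A} (a : A) l : In (last (a :: l) a) (a :: l).
Proof.
  revert a; induction l as [|b l IH]; intros a; [simpl; auto|].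
  change (In (last (b :: l) a) (a :: b :: l)). rewrite last_default. right. apply IH.
Qed.

Lemma last_app_cons {A} (l1 : list A) b l2 d : last (l1 ++ b :: l2) d = last (b :: l2) b.
Proof.
  induction l1 as [|c l1 IH]; simpl.
  - apply last_default.
  - destruct (l1 ++ b :: l2) eqn:E; [destruct l1; discriminate|]. exact IH.
Qed.

Lemma hd_rev_last {A} (a : A) l : hd_error (rev (a :: l)) = Some (last (a :: l) a).
Proof.
  rewrite (app_removelast_last a (l := a :: l)) at 1 by discriminate.
  now rewrite rev_app_distr.
Qed.

Lemma ends_last {A} (a : A) l v : ends (a :: l) v <-> last (a :: l) a = v.
Proof. unfold ends. rewrite hd_rev_last. split; intro H; [now injection H | now subst]. Qed.

Lemma starts_in {A} (p : list A) u : starts p u -> In u p.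
Proof. unfold starts. destruct p; simpl; intro H; [discriminate|]. injection H; auto. Qed.

Lemma ends_in {A} (p : list A) u : ends p u -> In u p.
Proof. intro H. apply in_rev, starts_in, H. Qed.

Lemma ends_app {A} (l1 m : list A) v : m <> [] -> ends (l1 ++ m) v -> ends m v.
Proof.
  unfold ends. rewrite rev_app_distr. intros Hm H.
  destruct (rev m) eqn:E; [|exact H].
  exfalso. apply Hm. now rewrite <- (rev_involutive m), E.
Qed.

Lemma NoDup_last_self {A} (a : A) l : NoDup (a :: l) -> last (a :: l) a = a -> l = [].
Proof.
  intros N L. destruct l as [|c l]; auto. exfalso.
  inversion N as [|? ? Ha]; subst. apply Ha.
  change (last (c :: l) a = a) in L. rewrite last_default in L. rewrite <- L. apply last_in.
Qed.

Lemma last_split {A} (P : A -> Prop) l : (exists a, In a l /\ P a) ->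
  exists l1 t l2, l = l1 ++ t :: l2 /\ P t /\ forall z, In z l2 -> ~ P z.
Proof.
  induction l as [|a l IH]; intros (x & Hx & Px); [destruct Hx|].
  destruct (classic (exists b, In b l /\ P b)) as [Hl|Hl].
  - destruct (IH Hl) as (l1 & t & l2 & E & Pt & H). exists (a :: l1), t, l2. rewrite E. auto.
  - exists [], a, l. split; [reflexivity|split].
    + destruct Hx as [<-|Hx]; auto. exfalso; eauto.
    + intros z Hz Pz. eauto.
Qed.

Lemma NoDup_length_le_rel {A B} (R : A -> B -> Prop) (l : list A) (m : list B) :
  NoDup l -> (forall a, In a l -> exists b, In b m /\ R a b) ->
  (forall a a' b, In a l -> In a' l -> R a b -> R a' b -> a = a') -> length l <= length m.
Proof.
  revert m; induction l as [|a l IH]; intros m N Hex Hinj; simpl; [lia|].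
  inversion N as [|? ? Hna Nl]; subst.
  destruct (Hex a (or_introl eq_refl)) as (b & Hb & Rab).
  destruct (in_split _ _ Hb) as (m1 & m2 & ->).
  assert (length l <= length (m1 ++ m2)).
  { apply IH; auto.
    - intros a' Ha'. destruct (Hex a' (or_intror Ha')) as (b' & Hb' & R').
      exists b'. split; auto. apply in_app_iff in Hb'. apply in_app_iff.
      destruct Hb' as [H|[<-|H]]; auto. exfalso.
      assert (a' = a) by (apply Hinj with b; simpl; auto). subst; auto.
    - intros x y z Hx Hy. apply Hinj; simpl; auto. }
  rewrite length_app in *. simpl. lia.
Qed.

Lemma NoDup_list_prod {A B} (l1 : list A) (l2 : list B) :
  NoDup l1 -> NoDup l2 -> NoDup (list_prod l1 l2).
Proof.
  intros N1 N2. induction N1 as [|a l1 Ha N1 IH]; simpl; [constructor|].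
  apply NoDup_app; auto.
  - apply Injective_map_NoDup; [intros x y E; now injection E | exact N2].
  - intros [a' b] Hin Hin'. apply in_map_iff in Hin as (b' & E & _).
    injection E as <- <-. apply in_prod_iff in Hin' as [Ha' _]. contradiction.
Qed.

Lemma functional_image_length {A B} (R : A -> B -> Prop) (L : list A) :
  (forall a x y, R a x -> R a y -> x = y) ->
  exists L' : list B, length L' <= length L /\ forall x, (exists a, In a L /\ R a x) -> In x L'.
Proof.
  intros Hf. induction L as [|a L IH].
  - exists []. split; auto. intros x (a & [] & _).
  - destruct IH as (L' & Hl & Hc).
    destruct (classic (exists x, R a x)) as [(x & Hx)|Hn].
    + exists (x :: L'). split; [simpl; lia|].
      intros y (a' & [<-|Ha'] & Hy); [left; eapply Hf; eauto | right; eauto].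
    + exists L'. split; [simpl; lia|].
      intros y (a' & [<-|Ha'] & Hy); [exfalso|]; eauto.
Qed.

Lemma walk_app {V} (R : V -> V -> Prop) l1 a l2 :
  walk R (l1 ++ [a]) -> walk R (a :: l2) -> walk R (l1 ++ a :: l2).
Proof.
  induction l1 as [|b l1 IH]; simpl; auto.
  intros H1 H2. destruct l1 as [|c l1]; simpl in *.
  - destruct H1; auto.
  - destruct H1 as [Hbc H1]. split; auto.
    apply IH; auto.
Qed.

Lemma walk_suffix {V} (R : V -> V -> Prop) l1 l2 : walk R (l1 ++ l2) -> walk R l2.
Proof.
  induction l1 as [|b l1 IH]; simpl; auto.
  intros H. apply IH. destruct (l1 ++ l2); auto. destruct H; auto.
Qed.

Lemma walk_rev {V} (R : V -> V -> Prop) (Hs : forall x y, R x y -> R y x) l :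
  walk R l -> walk R (rev l).
Proof.
  induction l as [|x l IH]; simpl; auto.
  intros H. destruct l as [|y l]; simpl; auto.
  destruct H as [Hxy H]. specialize (IH H). simpl in IH.
  rewrite <- app_assoc. apply walk_app; simpl; auto.
Qed.

Lemma walk_mono_in {V} (R R' : V -> V -> Prop) l :
  (forall x y, In x l -> In y l -> R x y -> R' x y) -> walk R l -> walk R' l.
Proof.
  induction l as [|x l IH]; simpl; auto.
  intros Hm H. destruct l as [|y l]; auto.
  destruct H as [Hxy H]. split.
  - apply Hm; simpl; auto.
  - apply IH; auto.
Qed.

Lemma is_path_has_vertex {A} (R : A -> A -> Prop) p : is_path R p -> exists x, In x p.
Proof. intros (Hne & _). destruct p as [|x p]; [congruence | exists x; left; auto]. Qed.

Lemma is_path_cons_inv {A} (R : A -> A -> Prop) a l : l <> [] -> is_path R (a :: l) -> is_path R l.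
Proof.
  intros Hne (_ & N & W). split; auto. split.
  - inversion N; auto.
  - destruct l; [congruence|]. destruct W; auto.
Qed.

Lemma is_path_suffix {A} (R : A -> A -> Prop) l1 l2 :
  l2 <> [] -> is_path R (l1 ++ l2) -> is_path R l2.
Proof.
  intros Hne (_ & N & W). split; auto. split.
  - eapply NoDup_app_remove_l; eauto.
  - eapply walk_suffix; eauto.
Qed.

Lemma XY_path_start_in_Y {V} (adj : V -> V -> Prop) X Y p u :
  XY_path adj X Y p -> starts p u -> Y u -> p = [u].
Proof.
  intros (Pp & u0 & v0 & St & En & Xu & Yv & HX & HY) Su Yu.
  destruct p as [|a r]; [discriminate|].
  unfold starts in *. simpl in St, Su. injection St as E1. injection Su as E2. subst u0 u.
  assert (a = v0) as <- by (apply HY; simpl; auto).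
  apply ends_last in En. f_equal. apply (NoDup_last_self a r); auto. apply Pp.
Qed.

Definition conn {A} (R : A -> A -> Prop) (C : A -> Prop) (a b : A) : Prop :=
  exists g, walk R (a :: g) /\ last (a :: g) a = b /\ forall z, In z (a :: g) -> C z.

Lemma conn_refl {A} (R : A -> A -> Prop) (C : A -> Prop) a : C a -> conn R C a a.
Proof. intros; exists []; simpl; intuition congruence. Qed.

Lemma conn_trans {A} (R : A -> A -> Prop) (C : A -> Prop) a b c :
  conn R C a b -> conn R C b c -> conn R C a c.
Proof.
  intros (g1 & W1 & L1 & C1) (g2 & W2 & L2 & C2).
  exists (g1 ++ g2).
  assert (E : exists r, a :: g1 = r ++ [b]).
  { exists (removelast (a :: g1)). rewrite <- L1. apply app_removelast_last. discriminate. }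
  destruct E as [r E].
  rewrite app_comm_cons, E, <- app_assoc.
  split; [|split].
  - apply walk_app; [rewrite <- E; auto | auto].
  - simpl. rewrite last_app_cons. auto.
  - intros z Hz. apply in_app_iff in Hz. destruct Hz as [Hz|Hz].
    + apply C1. rewrite E. apply in_app_iff; auto.
    + apply C2. auto.
Qed.

Lemma conn_sym {A} (R : A -> A -> Prop) (Hs : forall x y, R x y -> R y x) (C : A -> Prop) a b :
  conn R C a b -> conn R C b a.
Proof.
  intros (g & W & L & Cg).
  pose proof (hd_rev_last a g) as H. rewrite L in H.
  destruct (rev (a :: g)) as [|b' g'] eqn:E; [discriminate|].
  simpl in H. injection H as ->.
  exists g'. rewrite <- E. split; [|split].
  - apply walk_rev; auto.
  - change (last (rev g ++ [a]) b = a). apply last_last.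
  - intros z Hz. apply Cg. apply in_rev. auto.
Qed.

Lemma conn_from_head {A} (R : A -> A -> Prop) (C : A -> Prop) h l :
  walk R (h :: l) -> (forall z, In z (h :: l) -> C z) -> forall z, In z (h :: l) -> conn R C h z.
Proof.
  revert h; induction l as [|b l IH]; intros h W Cl z Hz.
  - destruct Hz as [<-|[]]. apply conn_refl. apply Cl; simpl; auto.
  - destruct Hz as [<-|Hz]; [apply conn_refl, Cl; simpl; auto|].
    destruct W as [Hhb W].
    apply conn_trans with b.
    + exists [b]. simpl. repeat split; auto. intros y [<-|[<-|[]]]; apply Cl; simpl; auto.
    + apply IH; auto. intros y Hy; apply Cl; simpl; auto.
Qed.

Lemma conn_in_walk {A} (R : A -> A -> Prop) (Hs : forall x y, R x y -> R y x)
  (C : A -> Prop) l a b :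
  walk R l -> (forall z, In z l -> C z) -> In a l -> In b l -> conn R C a b.
Proof.
  intros W Cl Ha Hb. destruct l as [|h l]; [destruct Ha|].
  apply conn_trans with h.
  - apply conn_sym; auto. apply conn_from_head with l; auto.
  - apply conn_from_head with l; auto.
Qed.

Lemma walk_shorten {A} (R : A -> A -> Prop) a g : walk R (a :: g) ->
  exists p, is_path R (a :: p) /\ last (a :: p) a = last (a :: g) a /\ incl (a :: p) (a :: g).
Proof.
  revert a; induction g as [|b g IH]; intros a W.
  - exists []. split; [|split]; auto.
    + split; [discriminate|split]; simpl; auto. constructor; auto. constructor.
    + apply incl_refl.
  - destruct W as [Hab W]. destruct (IH b W) as (p & Pp & Lp & Ip).
    destruct (classic (In a (b :: p))) as [Hin|Hnin].
    + destruct (in_split _ _ Hin) as (l1 & l2 & E).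
      exists l2. split; [|split].
      * rewrite E in Pp. eapply is_path_suffix; eauto. discriminate.
      * change (last (a :: l2) a = last (b :: g) a).
        rewrite (last_default b a g), <- Lp, <- (last_default b a p), E, last_app_cons.
        reflexivity.
      * intros z Hz. right. apply Ip. rewrite E. apply in_app_iff. right. exact Hz.
    + exists (b :: p). split; [|split].
      * destruct Pp as (_ & N & Wp). split; [discriminate|split].
        -- constructor; auto.
        -- split; auto.
      * change (last (b :: p) a = last (b :: g) a).
        rewrite (last_default b a p), (last_default b a g). exact Lp.
      * intros z [<-|Hz]; [left; auto|]. right. apply Ip. exact Hz.
Qed.

Lemma tree_path_unique {T} (tadj : T -> T -> Prop) (Htree : is_tree tadj) p q a b :
  is_path tadj (a :: p) -> is_path tadj (a :: q) ->
  last (a :: p) a = b -> last (a :: q) a = b -> p = q.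
Proof.
  destruct Htree as ((Hs & _) & _ & _ & Hacyclic).
  revert q a; induction p as [|c p IH]; intros q a Pp Pq Lp Lq.
  - simpl in Lp. rewrite <- Lp in Lq. symmetry. apply (NoDup_last_self a q); auto. apply Pq.
  - destruct q as [|d q].
    + simpl in Lq. rewrite <- Lq in Lp.
      pose proof (NoDup_last_self a (c :: p) (proj1 (proj2 Pp)) Lp). discriminate.
    + assert (Lc : last (c :: p) c = b) by (rewrite <- Lp; exact (eq_sym (last_default c a p))).
      assert (Ld : last (d :: q) d = b) by (rewrite <- Lq; exact (eq_sym (last_default d a q))).
      destruct (classic (c = d)) as [<-|Hcd].
      * f_equal. apply IH with c; auto; eapply is_path_cons_inv; eauto; discriminate.
      * exfalso.
        (* two different first steps out of [a] give a cycle through [a] *)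
        destruct Pp as (_ & Np & Hac & Wp). destruct Pq as (_ & Nq & Had & Wq).
        assert (Hbranch : forall e r, walk tadj (e :: r) -> NoDup (a :: e :: r) ->
                  last (e :: r) e = b -> conn tadj (fun z => z <> a) e b).
        { intros e r W N L. apply conn_in_walk with (e :: r); auto.
          - intros z Hz ->. inversion N; auto.
          - left; auto.
          - rewrite <- L. apply last_in. }
        pose proof (conn_trans _ _ _ _ _ (Hbranch c p Wp Np Lc)
                      (conn_sym _ Hs _ _ _ (Hbranch d q Wq Nq Ld))) as (g & Wg & Lg & Cg).
        destruct (walk_shorten _ _ _ Wg) as (r & (_ & Nr & Wr) & Lr & Ir).
        rewrite Lg in Lr.
        assert (Hr : r <> []) by (intro E; subst r; simpl in Lr; congruence).
        apply (Hacyclic (a :: c :: r)) with a d.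
        -- split; [discriminate|split].
           ++ constructor; auto. intro Hin. apply Ir in Hin. apply (Cg a Hin). auto.
           ++ split; auto.
        -- destruct r; [congruence|]. simpl. lia.
        -- reflexivity.
        -- apply ends_last. change (last (c :: r) a = d). now rewrite last_default.
        -- apply Hs. exact Had.
Qed.

Section TreeDecomposition.
Variables (V T : Type) (adj : V -> V -> Prop) (tadj : T -> T -> Prop) (bag : T -> V -> Prop).
Hypothesis tree_T : is_tree tadj.
Hypothesis td : tree_decomposition adj tadj bag.

Lemma bags_conn_through (C : V -> Prop) v t1 t2 :
  C v -> bag t1 v -> bag t2 v ->
  conn (fun t t' => tadj t t' /\ exists z, C z /\ bag t z /\ bag t' z)
       (fun t => exists z, C z /\ bag t z) t1 t2.
Proof.
  intros Cv H1 H2. destruct td as (_ & _ & Hsub).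
  destruct (Hsub v t1 t2 H1 H2) as (p & (_ & _ & Wp) & St & En & Hb).
  destruct p as [|x g]; [discriminate|]. unfold starts in St. simpl in St. injection St as ->.
  exists g. split; [|split].
  - eapply walk_mono_in; [|exact Wp]. intros x y Hx Hy Hxy. split; auto. exists v; auto.
  - apply ends_last; auto.
  - intros z Hz. exists v; auto.
Qed.

Lemma conn_lift (C : V -> Prop) a b t1 t2 :
  conn adj C a b -> bag t1 a -> bag t2 b ->
  conn (fun t t' => tadj t t' /\ exists z, C z /\ bag t z /\ bag t' z)
       (fun t => exists z, C z /\ bag t z) t1 t2.
Proof.
  intros (g & W & L & Cg). revert a t1 W L Cg.
  induction g as [|a' g IH]; intros a t1 W L Cg H1 H2.
  - simpl in L. subst b. apply bags_conn_through with a; auto. apply Cg; simpl; auto.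
  - destruct W as [Haa' W].
    destruct (proj1 (proj2 td) a a' Haa') as (t0 & T0a & T0a').
    apply conn_trans with t0.
    + apply bags_conn_through with a; auto. apply Cg; simpl; auto.
    + apply IH with a'; auto.
      * change (last (a' :: g) a = b) in L. now rewrite last_default in L.
      * intros z Hz. apply Cg. right. exact Hz.
Qed.

(* The walk lifts to a walk in the tree whose consecutive bags share a vertex off the
   adhesion set; its shortening is the unique tree path, whose first edge is [t t']. *)
Lemma adhesion_separates t t' q ty a b :
  is_path tadj (t :: t' :: q) -> last (t :: t' :: q) t = ty ->
  bag t a -> bag ty b -> ~ conn adj (fun z => ~ (bag t z /\ bag t' z)) a b.
Proof.
  intros Pt Lt Ha Hb Cab.
  destruct (conn_lift _ a b t ty Cab Ha Hb) as (g & Wg & Lg & _).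
  destruct (walk_shorten _ _ _ Wg) as (p & (Hne & Np & Wp) & Lp & _).
  rewrite Lg in Lp.
  assert (Pp : is_path tadj (t :: p)).
  { split; [|split]; auto. eapply walk_mono_in; [|exact Wp]. intros x y _ _ [Hxy _]; auto. }
  pose proof (tree_path_unique tadj tree_T p (t' :: q) t ty Pp Pt Lp Lt) as ->.
  destruct Wp as [[_ (z & Nz & Bz & Bz')] _].
  apply Nz. split; auto.
Qed.

Lemma adhesion_separator w (X Y : V -> Prop) x0 y0 :
  (forall t, card_le (bag t) (w + 1)) -> X x0 -> Y y0 ->
  (forall t, (exists v, bag t v /\ X v) -> (exists v, bag t v /\ Y v) -> False) ->
  exists S a b, card_le S (w + 1) /\ (forall z, S z -> ~ X z) /\ (forall z, S z -> ~ Y z) /\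
    X a /\ Y b /\ ~ conn adj (fun z => ~ S z) a b.
Proof.
  intros Hw Xx0 Yy0 Hno.
  destruct (proj1 td x0) as [t0 Ht0]. destruct (proj1 td y0) as [ty Hty].
  destruct (proj1 (proj2 (proj2 tree_T)) t0 ty) as (q & Pq & Sq & Eq).
  destruct (last_split (fun t => exists v, bag t v /\ X v) q)
    as (q1 & t & q2 & -> & (a & Ba & Xa) & Nq2).
  { exists t0. split; [apply starts_in; auto | eauto]. }
  destruct q2 as [|t' q].
  { unfold ends in Eq. rewrite rev_app_distr in Eq. simpl in Eq. injection Eq as ->.
    exfalso. eapply Hno; eauto. }
  exists (fun z => bag t z /\ bag t' z), a, y0.
  split; [|split; [|split; [|split; [|split]]]]; auto.
  - destruct (Hw t) as (L & HL & Hlen). exists L. split; auto. intros v [Hv _]. auto.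
  - intros z [_ Hz] Xz. apply (Nq2 t'); [left; auto | eauto].
  - intros z [Hz _] Yz. eapply Hno; eauto.
  - apply adhesion_separates with q ty; auto.
    + eapply is_path_suffix; eauto. discriminate.
    + apply ends_last. eapply ends_app; eauto. discriminate.
Qed.

End TreeDecomposition.

Definition fan {V} (adj : V -> V -> Prop) (U : V -> Prop) (p : list V) (l : nat)
  (Q : nat -> list V) : Prop :=
  (forall i, i < l -> XY_path adj U (fun v => In v p) (Q i)) /\
  (forall i j, i < l -> j < l -> i <> j ->
     Q i <> Q j /\ (forall v, In v (Q i) -> In v (Q j) -> In v p)).

Section Fan.
Variables (V : Type) (adj : V -> V -> Prop) (U : V -> Prop) (p : list V) (l : nat)
  (Q : nat -> list V).
Hypothesis fan_Q : fan adj U p l Q.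

Lemma fan_meet_off_path i j z : i < l -> j < l -> In z (Q i) -> In z (Q j) -> ~ In z p -> i = j.
Proof.
  intros Hi Hj Hzi Hzj Hzp. apply NNPP. intro Hij.
  apply Hzp, (proj2 (proj2 fan_Q i j Hi Hj Hij)); auto.
Qed.

Lemma fan_starts_inj i j u : i < l -> j < l -> starts (Q i) u -> starts (Q j) u -> i = j.
Proof.
  intros Hi Hj Hui Huj. apply NNPP. intro Hij.
  destruct (proj2 fan_Q i j Hi Hj Hij) as [Hne Hmeet].
  assert (Hu : In u p) by (apply Hmeet; apply starts_in; auto).
  apply Hne.
  now rewrite (XY_path_start_in_Y _ _ _ _ _ (proj1 fan_Q i Hi) Hui Hu),
              (XY_path_start_in_Y _ _ _ _ _ (proj1 fan_Q j Hj) Huj Hu).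
Qed.

Lemma fan_conn_avoiding (S : V -> Prop) i u a :
  (forall x y, adj x y -> adj y x) -> walk adj p -> (forall z, S z -> ~ In z p) ->
  i < l -> (forall z, In z (Q i) -> ~ S z) -> starts (Q i) u -> In a p ->
  conn adj (fun z => ~ S z) u a.
Proof.
  intros Hs Wp Sp Hi Avoid Su Ha.
  destruct (proj1 fan_Q i Hi) as ((_ & _ & Wq) & _ & e & _ & Ee & _ & He & _).
  apply conn_trans with e.
  - apply conn_in_walk with (Q i); auto. apply starts_in; auto. apply ends_in; auto.
  - apply conn_in_walk with p; auto. intros z Hz Sz. exact (Sp z Sz Hz).
Qed.

End Fan.

(* Each of the 2l fan paths is charged either to a vertex of [S] it meets, on its own side,
   or to its first vertex in [U]: this charging is injective. *)
Lemma fan_pair_separator_bound {V} (adj : V -> V -> Prop) (Hs : forall x y, adj x y -> adj y x)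
  (U : V -> Prop) l (S : V -> Prop) k (p : bool -> list V) (Q : bool -> nat -> list V) a a' :
  card_eq U l -> card_le S k ->
  (forall b, walk adj (p b)) -> (forall b, fan adj U (p b) l (Q b)) ->
  (forall b z, S z -> ~ In z (p b)) ->
  In a (p true) -> In a' (p false) -> ~ conn adj (fun z => ~ S z) a a' ->
  l <= 2 * k.
Proof.
  intros (Ul & _ & HUlen & HUl) (Sl & HSl & HSlen) Wp Fan Sp Ha Ha' Hsep.
  set (sides := [true; false]).
  set (charge := fun (bi : bool * nat) (c : (bool * V) + V) =>
    (exists z, c = inl (fst bi, z) /\ In z (Q (fst bi) (snd bi)) /\ S z) \/
    (exists u, c = inr u /\ starts (Q (fst bi) (snd bi)) u /\
               forall z, In z (Q (fst bi) (snd bi)) -> ~ S z)).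
  assert (Hcross : forall i j u, i < l -> j < l ->
            starts (Q true i) u -> (forall z, In z (Q true i) -> ~ S z) ->
            starts (Q false j) u -> (forall z, In z (Q false j) -> ~ S z) -> False).
  { intros i j u Hi Hj Su Avu Su' Avu'. apply Hsep. apply conn_trans with u.
    - apply conn_sym; auto.
      exact (fan_conn_avoiding _ _ _ _ _ _ (Fan true) S i u a Hs (Wp true) (Sp true) Hi Avu Su Ha).
    - exact (fan_conn_avoiding _ _ _ _ _ _ (Fan false) S j u a' Hs (Wp false) (Sp false)
               Hj Avu' Su' Ha'). }
  assert (Hcount : length (list_prod sides (seq 0 l)) <=
                   length (map inl (list_prod sides Sl) ++ map inr Ul)).
  { apply (NoDup_length_le_rel charge).
    - apply NoDup_list_prod; [repeat constructor; simpl; intuition discriminate | apply seq_NoDup].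
    - intros [b i] Hbi. apply in_prod_iff in Hbi. destruct Hbi as [Hb Hi].
      apply in_seq in Hi.
      destruct (classic (exists z, In z (Q b i) /\ S z)) as [(z & Hz & Sz)|Hn].
      + exists (inl (b, z)). split; [|left; eauto].
        apply in_app_iff. left. apply in_map, in_prod; auto.
      + destruct (proj1 (Fan b) i ltac:(lia)) as (_ & u & _ & Su & _ & Uu & _).
        exists (inr u). split.
        * apply in_app_iff. right. apply in_map, HUl, Uu.
        * right. exists u. repeat split; auto. intros z Hz Sz. eauto.
    - intros [b i] [b' j] c Hbi Hbj R1 R2.
      apply in_prod_iff in Hbi, Hbj. destruct Hbi as [_ Hi], Hbj as [_ Hj].
      apply in_seq in Hi, Hj.
      destruct R1 as [(z & -> & Hz & Sz)|(u & -> & Su & Avu)];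
      destruct R2 as [(z' & E & Hz' & Sz')|(u' & E & Su' & Avu')]; try discriminate;
        simpl in *.
      + injection E as <- <-. f_equal.
        apply (fan_meet_off_path _ _ _ _ _ _ (Fan b) i j z); auto; lia.
      + injection E as <-.
        destruct b, b'.
        * f_equal. apply (fan_starts_inj _ _ _ _ _ _ (Fan true) i j u); auto; lia.
        * exfalso. apply (Hcross i j u); auto; lia.
        * exfalso. apply (Hcross j i u); auto; lia.
        * f_equal. apply (fan_starts_inj _ _ _ _ _ _ (Fan false) i j u); auto; lia. }
  rewrite length_app, !length_map, !length_prod, length_seq in Hcount. simpl in Hcount. lia.
Qed.

Lemma fans_share_bag {V T} (adj : V -> V -> Prop) (tadj : T -> T -> Prop) (bag : T -> V -> Prop)
  w l (U : V -> Prop) px py Qx Qy :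
  (forall x y, adj x y -> adj y x) -> is_tree tadj -> tree_decomposition adj tadj bag ->
  (forall t, card_le (bag t) (w + 1)) -> 2 * w + 3 <= l -> card_eq U l ->
  is_path adj px -> is_path adj py -> fan adj U px l Qx -> fan adj U py l Qy ->
  exists t, (exists v, bag t v /\ In v px) /\ (exists v, bag t v /\ In v py).
Proof.
  intros Hs Htree Htd Hw Hl HU Hpx Hpy Fx Fy.
  apply NNPP. intro Hno.
  destruct (is_path_has_vertex _ _ Hpx) as [x0 Hx0], (is_path_has_vertex _ _ Hpy) as [y0 Hy0].
  destruct (adhesion_separator V T adj tadj bag Htree Htd w (fun v => In v px) (fun v => In v py)
              x0 y0 Hw Hx0 Hy0 ltac:(eauto))
    as (S & a & a' & HS & HSx & HSy & Ha & Ha' & Hsep).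
  assert (Hbound : l <= 2 * (w + 1)).
  { apply (fan_pair_separator_bound adj Hs U l S (w + 1) (fun b => if b then px else py)
             (fun b => if b then Qx else Qy) a a'); auto.
    - intros []; [apply Hpx | apply Hpy].
    - intros []; auto.
    - intros [] z Sz; auto. }
  lia.
Qed.

Record separator_paths {V T} (adj : V -> V -> Prop) (bag : T -> V -> Prop) (s : osep)
  (P : V -> list V) : Prop := {
  sp_path : forall x, sep_inter s x -> is_path adj (P x);
  sp_left : forall x v, sep_inter s x -> In v (P x) -> fst s v;
  sp_ends : forall x, sep_inter s x -> ends (P x) x;
  sp_disjoint : forall x y v, sep_inter s x -> sep_inter s y -> x <> y ->
                  In v (P x) -> ~ In v (P y);
  sp_share_bag : forall x y, sep_inter s x -> sep_inter s y -> x <> y ->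
                  exists t, (exists v, bag t v /\ In v (P x)) /\ (exists v, bag t v /\ In v (P y))
}.

Lemma left_robust_separator_paths {V T} (adj : V -> V -> Prop) (tadj : T -> T -> Prop)
  (bag : T -> V -> Prop) w l s :
  (forall x y, adj x y -> adj y x) -> is_tree tadj -> tree_decomposition adj tadj bag ->
  (forall t, card_le (bag t) (w + 1)) -> 2 * w + 3 <= l ->
  left_robust adj l s -> exists P, separator_paths adj bag s P.
Proof.
  intros Hs Htree Htd Hw Hl (U & _ & HU & P & HP & Hdisj & HQ).
  exists P. split.
  - apply HP.
  - intros x v Hx. apply HP, Hx.
  - apply HP.
  - intros x y v Hx Hy Hxy. exact (Hdisj x y Hx Hy Hxy v).
  - intros x y Hx Hy _.
    destruct (HQ x Hx) as (Qx & HQx & HQx2), (HQ y Hy) as (Qy & HQy & HQy2).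
    apply (fans_share_bag adj tadj bag w l U (P x) (P y) Qx Qy); auto.
    + apply HP, Hx.
    + apply HP, Hy.
    + split; [apply HQx | apply HQx2].
    + split; [apply HQy | apply HQy2].
Qed.

Section Torso.
Variables (V T : Type) (adj : V -> V -> Prop) (tadj : T -> T -> Prop) (bag : T -> V -> Prop).
Variables (w : nat) (sigma : @osep V -> Prop) (P : @osep V -> V -> list V).
Hypothesis adj_sym : forall x y, adj x y -> adj y x.
Hypothesis tree_T : is_tree tadj.
Hypothesis td : tree_decomposition adj tadj bag.
Hypothesis bag_card : forall t, card_le (bag t) (w + 1).
Hypothesis star_sigma : forall s s', sigma s -> sigma s' -> s <> s' -> sep_le s (sep_inv s').
Hypothesis paths_sigma : forall s, sigma s -> separator_paths adj bag s (P s).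

Definition branch_set (x v : V) : Prop :=
  (interior sigma x /\ v = x) \/ exists s, sigma s /\ sep_inter s x /\ In v (P s x).

Lemma separator_path_owner s x v :
  sigma s -> sep_inter s x -> sep_inter s v -> In v (P s x) -> x = v.
Proof.
  intros Hs Hx Hv Hin. apply NNPP. intro Hxv.
  apply (sp_disjoint _ _ _ _ (paths_sigma s Hs) x v v Hx Hv Hxv Hin).
  apply ends_in, (sp_ends _ _ _ _ (paths_sigma s Hs) v Hv).
Qed.

(* A vertex on paths of two different separations of the star lies in both separators. *)
Lemma branch_set_functional x y v : branch_set x v -> branch_set y v -> x = y.
Proof.
  intros [[Ix ->]|(s & Hs & Hx & Hin)] [[Iy Ey]|(s' & Hs' & Hy & Hin')].
  - auto.
  - symmetry. apply (separator_path_owner s' y x); auto.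
    split; [apply (sp_left _ _ _ _ (paths_sigma s' Hs') y) | apply Ix]; auto.
  - subst v. apply (separator_path_owner s x y); auto.
    split; [apply (sp_left _ _ _ _ (paths_sigma s Hs) x) | apply Iy]; auto.
  - assert (Hvs : fst s v) by (apply (sp_left _ _ _ _ (paths_sigma s Hs) x); auto).
    assert (Hvs' : fst s' v) by (apply (sp_left _ _ _ _ (paths_sigma s' Hs') y); auto).
    destruct (classic (s = s')) as [<-|Hss'].
    + apply NNPP. intro Hxy.
      exact (sp_disjoint _ _ _ _ (paths_sigma s Hs) x y v Hx Hy Hxy Hin Hin').
    + destruct (star_sigma s s' Hs Hs' Hss') as [Hle _].
      destruct (star_sigma s' s Hs' Hs (not_eq_sym Hss')) as [Hle' _].
      transitivity v.
      * apply (separator_path_owner s x v); auto. exact (conj Hvs (Hle' v Hvs')).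
      * symmetry. apply (separator_path_owner s' y v); auto. exact (conj Hvs' (Hle v Hvs)).
Qed.

Lemma branch_set_conn x v : branch_set x v -> conn adj (branch_set x) v x.
Proof.
  intros [[Ix ->]|(s & Hs & Hx & Hin)].
  - apply conn_refl. left; auto.
  - apply (conn_in_walk adj adj_sym _ (P s x)); auto.
    + apply (sp_path _ _ _ _ (paths_sigma s Hs) x Hx).
    + intros z Hz. right. exists s; auto.
    + apply ends_in, (sp_ends _ _ _ _ (paths_sigma s Hs) x Hx).
Qed.

Definition torso_bag (t : T) (x : {x : V | interior sigma x}) : Prop :=
  exists v, bag t v /\ branch_set (proj1_sig x) v.

Lemma torso_bag_card t : card_le (torso_bag t) (w + 1).
Proof.
  destruct (bag_card t) as (L & HL & HLlen).
  destruct (functional_image_length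
              (fun v (x : {x : V | interior sigma x}) => branch_set (proj1_sig x) v) L)
    as (L' & HL'len & HL').
  - intros v [x Hx] [y Hy] Mx My. simpl in *.
    destruct (branch_set_functional x y v Mx My). f_equal. apply proof_irrelevance.
  - exists L'. split; [|lia].
    intros x (v & Bv & Mv). apply HL'. eauto.
Qed.

Lemma torso_bag_edges x y :
  torso_adj adj sigma x y -> exists t, torso_bag t x /\ torso_bag t y.
Proof.
  destruct x as [x Ix], y as [y Iy]. intros (Hxy & [Hadj|(s & Hs & Hx & Hy)]); simpl in *.
  - destruct (proj1 (proj2 td) x y Hadj) as (t & Htx & Hty).
    exists t. split; [exists x | exists y]; split; auto; left; auto.
  - destruct (sp_share_bag _ _ _ _ (paths_sigma s Hs) x y Hx Hy Hxy)
      as (t & (a & Ba & Ia) & (b & Bb & Ib)).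
    exists t. split; [exists a | exists b]; split; auto; right; exists s; auto.
Qed.

(* The branch set of [x] is connected, so the bags meeting it form a subtree. *)
Lemma torso_bag_subtree x t1 t2 :
  torso_bag t1 x -> torso_bag t2 x ->
  exists p, is_path tadj p /\ starts p t1 /\ ends p t2 /\ forall t, In t p -> torso_bag t x.
Proof.
  destruct x as [x Ix]. intros (v1 & B1 & M1) (v2 & B2 & M2). simpl in *.
  pose proof (conn_trans _ _ _ _ _ (branch_set_conn x v1 M1)
                (conn_sym _ adj_sym _ _ _ (branch_set_conn x v2 M2))) as C12.
  destruct (conn_lift V T adj tadj bag td _ v1 v2 t1 t2 C12 B1 B2) as (g & Wg & Lg & Ng).
  destruct (walk_shorten _ _ _ Wg) as (p & (Hne & Np & Wp) & Lp & Ip).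
  exists (t1 :: p). split; [|split; [|split]].
  - split; [|split]; auto. eapply walk_mono_in; [|exact Wp]. intros a b _ _ [Hab _]; auto.
  - reflexivity.
  - apply ends_last. now rewrite Lp.
  - intros t Ht. apply Ip in Ht. destruct (Ng t Ht) as (z & Mz & Bz). exists z; auto.
Qed.

Lemma torso_tw_le : tw_le (torso_adj adj sigma) w.
Proof.
  exists T, tadj, torso_bag. split; [exact tree_T|split; [split; [|split]|]].
  - intros [x Ix]. destruct (proj1 td x) as [t Ht]. exists t, x. split; auto. left; auto.
  - exact torso_bag_edges.
  - exact torso_bag_subtree.
  - exact torso_bag_card.
Qed.

End Torso.

Theorem corollary6p3 (V : Type) (adj : V -> V -> Prop) (w : nat)
  (sigma : @osep V -> Prop) :
  simple_graph adj ->
  tw_le adj w ->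
  is_star adj sigma ->
  finite_star sigma ->
  (forall s, sigma s -> order_le s (w + 1)) ->
  finite_set (interior sigma) ->
  (forall s, sigma s ->
     left_robust adj ((w + 1) ^ 2 * (w + 2) + w + 1) s) ->
  tw_le (torso_adj adj sigma) w.
Proof.
  intros [Hs _] (T & tadj & bag & Htree & Htd & Hw) (_ & _ & Hstar) _ _ _ Hrob.
  assert (Hl : 2 * w + 3 <= (w + 1) ^ 2 * (w + 2) + w + 1) by (rewrite Nat.pow_2_r; nia).
  destruct (functional_choice (fun s P => sigma s -> separator_paths adj bag s P)) as (P & HP).
  { intros s. destruct (classic (sigma s)) as [Hss|Hns].
    - destruct (left_robust_separator_paths adj tadj bag w _ s Hs Htree Htd Hw Hl (Hrob s Hss))
        as (P & HP).
      exists P. auto.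
    - exists (fun _ => []). contradiction. }
  exact (torso_tw_le V T adj tadj bag w sigma P Hs Htree Htd Hw Hstar HP).
Qed.
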